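(* Let $f:\{0,1\}^N\to\{0,1\}$ be a total function. Then \[\mathrm{H}(\mathrm{C}_f)=O(\mathrm{H}(\mathrm{bs}_f)^2\log N).\]
   Context: $\mathrm{C}_f(x)$ is the certificate complexity and $\mathrm{bs}_f(x)$ the block sensitivity (maximum number of disjoint sensitive blocks) of $f$ at $x$. For $g:\{0,1\}^N\to[0,\infty)$, the H-index $\mathrm{H}(g)$ is the maximum $h$ such that at least $2^h$ inputs satisfy $g(x)\geq h$ (equivalently, the minimum $h$ such that at most $2^h$ inputs satisfy $g(x)>h$). *)

From mathcomp Require Import all_boot all_order all_algebra.
From mathcomp Require Import classical_sets reals exp.
Set Implicit Arguments. Unset Strict Implicit. Unset Printing Implicit Defensive.
Import Order.TTheory GRing.Theory Num.Theory.
Local Open Scope ring_scope.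

Definition input (N : nat) := {ffun 'I_N -> bool}.

Definition agree_on N (S : {set 'I_N}) (x y : input N) : bool :=
  [forall i in S, x i == y i].

Definition is_certificate N (f : input N -> bool) (x : input N) (S : {set 'I_N}) : bool :=
  [forall y : input N, agree_on S x y ==> (f y == f x)].

(* C_f(x): minimum size of a certificate (the full set is always one, so the
   default value N is never the effective answer unless attained) *)
Definition cert_complexity N (f : input N -> bool) (x : input N) : nat :=
  \big[minn/N]_(S : {set 'I_N} | is_certificate f x S) #|S|.

Definition flip N (x : input N) (B : {set 'I_N}) : input N :=
  [ffun i => if i \in B then ~~ x i else x i].

Definition sensitive_block N (f : input N -> bool) (x : input N) (B : {set 'I_N}) : bool :=
  f (flip x B) != f x.

Definition block_sensitivity N (f : input N -> bool) (x : input N) : nat :=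
  \max_(P : {set {set 'I_N}} |
          finset.trivIset P && [forall B in P, sensitive_block f x B]) #|P|.

(* H-index of g : {0,1}^N -> [0,oo): the maximum real h such that at least
   2^h inputs satisfy g x >= h (the maximum exists; we take the supremum). *)
Definition Hindex (R : realType) N (g : input N -> R) : R :=
  sup [set h : R | (2 : R) `^ h <= (#|[set x : input N | h <= g x]|)%:R].

(* Let m exceed the H-index of bs_f, so that fewer than 2^m inputs have block
   sensitivity at least m.  Call x separable if some set H of at most m
   coordinates distinguishes x from all of them.  Halving the bad set along a
   minority coordinate shows that at most (2N+1)^m inputs are not separable.
   A separable x has C_f(x) <= m^2: a maximal family of disjoint sensitive
   blocks of size < m covers at most (m-1)^2 coordinates, and together with H
   it forms a certificate.  Hence at most N^(3m) inputs have C_f > m^2, so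
   H(C_f) <= m^2 + 3m log2 N = O(H(bs_f)^2 log N). *)

From mathcomp Require Import all_boot all_order all_algebra.
From mathcomp Require Import reals exp.
From mathcomp Require Import zify ring lra.
Import Order.TTheory GRing.Theory Num.Theory.
Set Implicit Arguments. Unset Strict Implicit. Unset Printing Implicit Defensive.

Lemma leq_card_bigcup (I T : finType) (P : {pred I}) (F : I -> {set T}) :
  #|\bigcup_(i in P) F i| <= \sum_(i in P) #|F i|.
Proof.
elim/big_rec2: _ => [|i s S _ IH]; first by rewrite cards0.
by rewrite (leq_trans (leq_card_setU _ _).1) ?leq_add.
Qed.

Section Separation.

Variable N : nat.
Implicit Types (Y : {set input N}) (x : input N) (H : {set 'I_N}).

Definition separates Y x H := [forall y : input N in Y, [exists i in H, x i != y i]].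

Definition separable Y (k : nat) x := [exists H : {set 'I_N}, (#|H| <= k) && separates Y x H].

Definition slice Y i b := [set y in Y | y i == b].

Definition majority_point Y x := [forall i, #|Y| < 2 * #|slice Y i (x i)|].

Lemma separates_setU1 Y x H i :
  separates (slice Y i (x i)) x H -> separates Y x (i |: H).
Proof.
move=> /forallP sepH; apply/forallP=> y; apply/implyP=> yY.
have [yi|yi] := eqVneq (y i) (x i).
  have /(implyP (sepH y))/existsP[j /andP[jH xj]] : y \in slice Y i (x i).
    by rewrite inE yY yi /=.
  by apply/existsP; exists j; rewrite !inE jH orbT.
by apply/existsP; exists i; rewrite !inE eqxx eq_sym yi.
Qed.

Lemma card_slice Y i b : #|slice Y i b| + #|slice Y i (~~ b)| = #|Y|.
Proof.
rewrite -(cardsID [set y : input N | y i == b] Y); congr (_ + _); apply: eq_card => y.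
  by rewrite !inE.
by rewrite !inE; case: (y i); case: b; rewrite ?andbT ?andbF.
Qed.

Lemma card_majority_point Y : #|[set x | majority_point Y x]| <= 1.
Proof.
apply/card_le1_eqP => x1 x2; rewrite !inE => /forallP maj1 /forallP maj2.
apply/ffunP=> i; apply/eqP/negPn/negP => x12.
have x2i : x2 i = ~~ x1 i by move: x12; case: (x1 i); case: (x2 i).
have := leq_add (maj1 i) (maj2 i); rewrite x2i -mulnDr card_slice; lia.
Qed.

Lemma nonseparable_subset Y k :
  [set x | ~~ separable Y k.+1 x] \subset
    [set x | majority_point Y x] :|:
    \bigcup_(p | 2 * #|slice Y p.1 p.2| <= #|Y|) [set x | ~~ separable (slice Y p.1 p.2) k x].
Proof.
apply/subsetP=> x; rewrite !inE => nsep.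
case: (boolP (majority_point Y x)) => [//|/forallPn[i mini]].
apply/orP; right; apply/bigcupP; exists (i, x i); first by rewrite leqNgt.
rewrite inE; apply: contra nsep => /existsP[H /andP[Hk sepH]].
apply/existsP; exists (i |: H); rewrite separates_setU1 // andbT.
by rewrite (leq_trans (leq_card_setU _ _).1) // cards1.
Qed.

Lemma card_nonseparable k Y :
  #|Y| < 2 ^ k -> #|[set x | ~~ separable Y k x]| <= (2 * N + 1) ^ k.
Proof.
elim: k Y => [|k IH] Y hY.
  rewrite expn0 ltnS leqn0 cards_eq0 in hY; rewrite (eqP hY) expn0.
  apply: (leq_trans _ (leqnSn 0)); rewrite leqn0 cards_eq0; apply/eqP/setP=> x.
  rewrite !inE negbK; apply/existsP; exists set0; rewrite cards0 /=.
  by apply/forallP=> y; rewrite inE.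
rewrite (leq_trans (subset_leq_card (nonseparable_subset Y k))) //.
rewrite (leq_trans (leq_card_setU _ _).1) //.
rewrite (leq_trans (leq_add (card_majority_point Y) (leq_card_bigcup _ _))) //.
rewrite (@leq_trans (1 + \sum_(p : 'I_N * bool) (2 * N + 1) ^ k)) //.
  rewrite leq_add2l big_mkcond /= leq_sum // => p _.
  case: ifP => // half; apply: IH.
  by rewrite -(ltn_pmul2l (isT : 0 < 2)) (leq_ltn_trans half) // -expnS.
rewrite sum_nat_const card_prod card_ord card_bool expnS.
have : 0 < (2 * N + 1) ^ k by rewrite expn_gt0 addn1.
move: ((2 * N + 1) ^ k) => a; nia.
Qed.

End Separation.

Section FlipBlocks.

Variables (N : nat) (f : input N -> bool).
Implicit Types (x z : input N) (B D : {set 'I_N}) (P : {set {set 'I_N}}).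

Lemma flip0 x : flip x set0 = x.
Proof. by apply/ffunP=> i; rewrite ffunE inE. Qed.

Lemma flip_diff x z : flip x [set i | x i != z i] = z.
Proof. by apply/ffunP=> i; rewrite ffunE inE; case: (x i); case: (z i). Qed.

Lemma flip_flip1 x B i : i \in B -> flip (flip x B) [set i] = flip x (B :\ i).
Proof.
move=> iB; apply/ffunP=> j; rewrite !ffunE !inE.
by case: (eqVneq j i) => [->|]; rewrite ?iB ?negbK.
Qed.

Lemma cert_complexity_le x S : is_certificate f x S -> cert_complexity f x <= #|S|.
Proof. by move=> cS; have := bigmin_le_cond N (fun S : {set 'I_N} => #|S|) cS. Qed.

Lemma leq_block_sensitivity x P :
  trivIset P -> {in P, forall B, sensitive_block f x B} ->
  #|P| <= block_sensitivity f x.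
Proof.
move=> trP sensP; apply: (leq_bigmax_cond P); rewrite trP /=.
by apply/forallP=> B; apply/implyP/sensP.
Qed.

Lemma block_sensitivity_gt0 x z : f z != f x -> 0 < block_sensitivity f x.
Proof.
move=> fzx; apply: leq_trans (leq_block_sensitivity (trivIset1 [set i | x i != z i]) _).
  by rewrite cards1.
by move=> B; rewrite inE => /eqP ->; rewrite /sensitive_block flip_diff.
Qed.

Lemma minimal_sensitive_subblock x D : sensitive_block f x D ->
  exists2 B : {set 'I_N}, B \subset D &
    sensitive_block f x B /\ {in B, forall i, ~~ sensitive_block f x (B :\ i)}.
Proof.
move=> sD; pose ok (B : {set 'I_N}) := (B \subset D) && sensitive_block f x B.
have okD : ok D by rewrite /ok subxx.
case: (arg_minnP (fun B : {set 'I_N} => #|B|) okD) => B /andP[BD sB] minB.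
exists B => //; split=> // i iB; apply/negP=> sBi.
have := minB (B :\ i); rewrite /ok (subset_trans (subsetDl B [set i]) BD) sBi.
by rewrite (cardsD1 i B) iB ltnn => /(_ isT).
Qed.

(* Flipping a minimal sensitive block makes each of its points sensitive. *)
Lemma minimal_sensitive_block_bs x B : sensitive_block f x B ->
  {in B, forall i, ~~ sensitive_block f x (B :\ i)} ->
  #|B| <= block_sensitivity f (flip x B).
Proof.
move=> sB minB; rewrite -(card_imset B (@set1_inj _)); apply: leq_block_sensitivity.
  apply/trivIsetP => _ _ /imsetP[i _ ->] /imsetP[j _ ->] ij.
  rewrite -setI_eq0; apply/eqP/setP=> k; rewrite !inE.
  by apply/andP=> -[/eqP -> /eqP ji]; rewrite ji eqxx in ij.
move=> _ /imsetP[i iB ->]; have := minB i iB.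
by rewrite /sensitive_block flip_flip1 // negbK => /eqP ->; rewrite eq_sym.
Qed.

End FlipBlocks.

Section SmallBlocks.

Variables (N : nat) (f : input N -> bool) (m : nat).
Implicit Types (x z : input N) (B : {set 'I_N}) (P : {set {set 'I_N}}).

Definition small_blocks x P :=
  trivIset P && [forall B in P, sensitive_block f x B && (#|B| < m)].

Lemma card_cover_small_blocks x P :
  small_blocks x P -> #|cover P| <= block_sensitivity f x * m.-1.
Proof.
move=> /andP[trP /forall_inP smallP].
have sensP : {in P, forall B, sensitive_block f x B}.
  by move=> B /smallP /andP[].
rewrite (leq_trans (leq_card_cover P).1) // (@leq_trans (\sum_(B in P) m.-1)) //.
  by apply: leq_sum => B /smallP /andP[_]; case: (m).
by rewrite sum_nat_const leq_mul2r leq_block_sensitivity ?orbT.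
Qed.

(* A sensitive block avoiding a maximal family of disjoint small sensitive
   blocks must be large, so flipping a minimal one leads to an input of block
   sensitivity at least m, which H distinguishes from x. *)
Lemma maximal_small_blocks_certificate x P H :
  small_blocks x P -> (forall Q, small_blocks x Q -> #|Q| <= #|P|) ->
  separates [set y | m <= block_sensitivity f y] x H ->
  is_certificate f x (cover P :|: H).
Proof.
move=> smallP maxP /forall_inP sepH; apply/forall_inP => z /forall_inP agree.
apply/negPn/negP=> fzx.
have sD : sensitive_block f x [set i | x i != z i] by rewrite /sensitive_block flip_diff.
have [B BD [sB minB]] := minimal_sensitive_subblock sD.
have notBS i : i \in B -> i \in cover P :|: H -> False.
  by move=> /(subsetP BD); rewrite inE => /negP xz /agree.
have [Bsmall|Blarge] := ltnP #|B| m.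
  have /andP[trP /forall_inP smallBs] := smallP.
  have B0 : set0 \notin P.
    by apply: contraL sB => /smallBs /andP[]; rewrite /sensitive_block flip0 eqxx.
  have disB : {in P, forall C : {set 'I_N}, [disjoint B & C]}.
    move=> C CP; apply/pred0P => i /=; apply/negP => /andP[iB iC].
    by apply: (notBS i iB); rewrite inE; apply/orP; left; apply/bigcupP; exists C.
  have [trBP BnP] := trivIsetU1 disB trP B0.
  have smallBP : small_blocks x (B |: P).
    rewrite /small_blocks trBP; apply/forall_inP => C; rewrite !inE.
    by case/orP=> [/eqP -> | /smallBs]; rewrite ?sB ?Bsmall.
  by have := maxP _ smallBP; rewrite cardsU1 BnP ltnn.
have /sepH/existsP[i /andP[iH]] : flip x B \in [set y | m <= block_sensitivity f y].
  by rewrite inE (leq_trans Blarge) // minimal_sensitive_block_bs.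
rewrite ffunE; case: ifP => [iB _|_]; last by rewrite eqxx.
by apply: (notBS i iB); rewrite inE iH orbT.
Qed.

Lemma cert_complexity_le_separable x :
  separable [set y | m <= block_sensitivity f y] m x -> cert_complexity f x <= m ^ 2.
Proof.
move=> /existsP[H /andP[Hm sepH]].
have bsx : block_sensitivity f x < m.
  rewrite ltnNge; apply/negP=> bsx.
  have /(forall_inP sepH)/existsP[i /andP[_]] : x \in [set y | m <= block_sensitivity f y].
    by rewrite inE.
  by rewrite eqxx.
have small0 : small_blocks x set0.
  rewrite /small_blocks (trivIsetS (sub0set _) (trivIset1 set0)).
  by apply/forall_inP => B; rewrite inE.
have [P smallP maxP] := arg_maxnP (fun P => #|P|) small0.
apply: leq_trans (cert_complexity_le (maximal_small_blocks_certificate smallP maxP sepH)) _.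
rewrite (leq_trans (leq_card_setU _ _).1) //.
have := card_cover_small_blocks smallP; move: #|cover P| bsx; nia.
Qed.

End SmallBlocks.

Lemma card_cert_complexity_gt N (f : input N -> bool) m : (2 <= N)%N ->
  (#|[set y | m <= block_sensitivity f y]| < 2 ^ m)%N ->
  (#|[set x | m ^ 2 < cert_complexity f x]| <= N ^ (3 * m))%N.
Proof.
move=> N_ge2 /card_nonseparable card_nonsep.
apply: leq_trans (subset_leq_card _) (leq_trans card_nonsep _).
  apply/subsetP=> x; rewrite !inE; apply: contraTT; rewrite negbK -leqNgt.
  exact: cert_complexity_le_separable.
by rewrite expnM; case: (m) => // k; rewrite leq_exp2r //; nia.
Qed.

Lemma cert_complexity_const N (f : input N -> bool) x :
  (forall y, f y = f x) -> cert_complexity f x = 0%N.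
Proof.
move=> fconst; apply/eqP; rewrite -leqn0 -(cards0 'I_N) cert_complexity_le //.
by apply/forall_inP => y _; rewrite fconst.
Qed.

Local Open Scope ring_scope.

Section Hindex.

Variables (R : realType) (N : nat) (G : input N -> nat).

Let HG := Hindex (fun x => (G x)%:R : R).

Lemma ln2_gt0 : 0 < ln (2 : R).
Proof. by rewrite ln_gt0 // ltr1n. Qed.

Lemma Hindex_le (K : R) :
  (forall h, K < h -> (#|[set x | h <= (G x)%:R]|)%:R < 2 `^ h) -> HG <= K.
Proof.
move=> smallK; apply: ge_sup.
  exists 0; rewrite /= powRr0 ler1n; apply/card_gt0P.
  by exists [ffun => false]; rewrite inE ler0n.
move=> h /= hh; rewrite leNgt; apply/negP=> /smallK.
by rewrite ltNge hh.
Qed.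

Lemma Hindex_ge (h : R) : 2 `^ h <= (#|[set x | h <= (G x)%:R]|)%:R -> h <= HG.
Proof.
move=> hh; apply: ub_le_sup => //.
exists (ln (#|input N|%:R) / ln 2) => y /= hy.
have card_input_gt0 : (0 < #|input N|)%N by apply/card_gt0P; exists [ffun => false].
rewrite ler_pdivlMr ?ln2_gt0 // -ln_powR ler_ln ?posrE ?powR_gt0 ?ltr0n //.
by rewrite (le_trans hy) // ler_nat max_card.
Qed.

Lemma card_Hindex_lt (m : nat) : HG < m%:R -> (#|[set x | m <= G x]| < 2 ^ m)%N.
Proof.
move=> Hm; rewrite ltnNge; apply: contraTN Hm => big; rewrite -leNgt.
apply: Hindex_ge; rewrite powR_mulrn // -natrX ler_nat.
by apply: leq_trans big (eq_leq (eq_card _)) => x; rewrite !inE ler_nat.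
Qed.

Lemma Hindex_le_card (K M : nat) : (0 < M)%N ->
  (#|[set x | K < G x]| <= M)%N -> HG <= K%:R + ln M%:R / ln 2.
Proof.
move=> M_gt0 cardM; apply: Hindex_le => h Kh.
have lnM_ge0 : 0 <= ln (M%:R : R) / ln 2 by rewrite divr_ge0 ?ln_ge0 ?ler1n // ltW ?ln2_gt0.
have ltM : M%:R < 2 `^ h.
  rewrite -ltr_ln ?posrE ?ltr0n ?powR_gt0 // ln_powR -ltr_pdivrMr ?ln2_gt0 //.
  by apply: le_lt_trans Kh; rewrite lerDr.
apply: le_lt_trans ltM; rewrite ler_nat (leq_trans _ cardM) // subset_leq_card //.
apply/subsetP=> x; rewrite !inE => hG; rewrite -(ltr_nat R).
by apply: lt_le_trans hG; apply: le_lt_trans Kh; rewrite lerDl.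
Qed.

End Hindex.

Lemma Hindex_cert_complexity_const (R : realType) N (f : input N -> bool) :
  (forall x y, f x = f y) -> Hindex (fun x => (cert_complexity f x)%:R : R) <= 0.
Proof.
move=> fconst; apply: Hindex_le => h h_gt0.
rewrite (_ : [set x | _] = set0) ?cards0 ?powR_gt0 //; apply/setP=> x.
by rewrite !inE cert_complexity_const ?leNgt ?h_gt0.
Qed.

Lemma Hindex_block_sensitivity_ge1 (R : realType) N (f : input N -> bool) x y :
  (0 < N)%N -> f x != f y -> 1 <= Hindex (fun x => (block_sensitivity f x)%:R : R).
Proof.
move=> N_gt0 fxy; apply: Hindex_ge; rewrite powRr1 // (_ : [set x | _] = setT).
  rewrite cardsT card_ffun card_bool card_ord ler_nat.
  by rewrite (leq_trans _ (ltn_expl N (ltnSn 1))).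
apply/setP=> z; rewrite !inE ler1n.
have [fxz|fxz] := eqVneq (f x) (f z); last exact: block_sensitivity_gt0 fxz.
by apply: (block_sensitivity_gt0 (z := y)); rewrite -fxz eq_sym.
Qed.

Lemma sqr_add_mul_le (R : realFieldType) (b s t : R) :
  1 <= b -> 1 <= t -> 0 <= s <= b + 1 -> s ^+ 2 + 3 * s * t <= 10 * b ^+ 2 * t.
Proof.
move=> b1 t1 /andP[s0 sb].
have s_le : s <= 2 * b by lra.
have bb_le : b ^+ 2 <= b ^+ 2 * t by nra.
have bt_le : b * t <= b ^+ 2 * t by nra.
have ss_le : s ^+ 2 <= 4 * b ^+ 2 by nra.
have st_le : s * t <= 2 * b * t by nra.
lra.
Qed.

Theorem theorem23 (R : realType) :
  exists c : R, 0 < c /\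
    forall (N : nat), (2 <= N)%N -> forall f : input N -> bool,
      Hindex (fun x => (cert_complexity f x)%:R : R)
      <= c * (Hindex (fun x => (block_sensitivity f x)%:R : R)) ^+ 2 * ln (N%:R : R).
Proof.
exists (10 / ln 2); split; first by rewrite divr_gt0 ?ln2_gt0.
move=> N N_ge2 f; set hb := Hindex (fun x => (block_sensitivity f x)%:R : R).
have lnN_ge1 : 1 <= ln (N%:R : R) / ln 2.
  by rewrite ler_pdivlMr ?ln2_gt0 // mul1r ler_ln ?posrE ?ltr0n ?ler_nat //; lia.
have [fconst|/existsP[x /existsP[y fxy]]] := boolP [forall x, forall y, f x == f y].
  apply: le_trans (Hindex_cert_complexity_const R _) _.
    by move=> x y; apply/eqP; move/forallP/(_ x)/forallP: fconst.
  rewrite mulr_ge0 ?ln_ge0 ?ler1n 1?ltnW // mulr_ge0 ?sqr_ge0 //.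
  by rewrite divr_ge0 // ltW ?ln2_gt0.
have hb_ge1 : 1 <= hb by apply: Hindex_block_sensitivity_ge1 fxy; apply: ltnW.
set m := (Num.truncn hb).+1.
have hb_lt_m : hb < m%:R by apply: truncnS_gt.
have m_le : m%:R <= hb + 1 by rewrite -natr1 lerD2r truncn_le (le_trans _ hb_ge1).
have cardC := card_cert_complexity_gt N_ge2 (card_Hindex_lt hb_lt_m).
have cardC_gt0 : (0 < N ^ (3 * m))%N by rewrite expn_gt0 (leq_trans _ N_ge2).
apply: le_trans (Hindex_le_card R cardC_gt0 cardC) _.
rewrite !natrX lnXn ?ltr0n ?(leq_trans _ N_ge2) // -[ln _ *+ _]mulr_natl natrM.
rewrite -[3 * _ * _ / _]mulrA.
rewrite [X in _ <= X](_ : _ = 10 * hb ^+ 2 * (ln N%:R / ln 2)); last by clearbody hb; ring.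
by rewrite sqr_add_mul_le // m_le ler0n.
Qed.
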